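(* Let $S$ be a $d$-dimensional space form ($d\ge 2$), i.e. one of: the Euclidean space $\mathbb{R}^d$; the spherical space $\mathbb{S}^d=\{x\in\mathbb{R}^{d+1}:\langle x,x\rangle = C_{\mathbb S}^{-1}\}$ with curvature $C_{\mathbb S}>0$; or the hyperbolic space (Lorentz/'Loid model) $\mathbb{H}^d=\{x\in\mathbb{R}^{d+1}:[x,x]=C_{\mathbb H}^{-1},\ x_1>0\}$ with curvature $C_{\mathbb H}<0$. Then the VC dimension of the class of linear classifiers on $S$ (defined below) equals $\dim(S)+1=d+1$.
   Context: Here $\langle\cdot,\cdot\rangle$ is the standard dot product and $[u,v]=u^{\top}Hv$ with $H=\mathrm{diag}(-1,1,\dots,1)\in\mathbb{R}^{(d+1)\times(d+1)}$ is the Lorentzian inner product. The linear classifiers are: on $\mathbb{R}^d$, $x\mapsto \mathrm{sgn}(w^{\top}x+b)$ with $w\in\mathbb{R}^d$, $\|w\|_2=1$, $b\in\mathbb{R}$; on $\mathbb{S}^d$, $x\mapsto\mathrm{sgn}(\mathrm{asin}(\langle w,x\rangle))$ with $w\in\mathbb{R}^{d+1}$, $\langle w,w\rangle=C_{\mathbb S}$; on $\mathbb{H}^d$, $x\mapsto\mathrm{sgn}(\mathrm{asinh}([w,x]))$ with $w\in\mathbb{R}^{d+1}$, $[w,w]=-C_{\mathbb H}$. The VC dimension of a class of $\{\pm1\}$-valued functions is the largest number of points it shatters. *)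

From HB Require Import structures.
From mathcomp Require Import all_boot all_order all_algebra.
From mathcomp Require Import all_classical all_reals all_analysis.
Set Implicit Arguments. Unset Strict Implicit. Unset Printing Implicit Defensive.
Import Order.TTheory GRing.Theory Num.Theory.
Local Open Scope ring_scope.
Local Open Scope classical_set_scope.

Section Defs.
Variable R : realType.

(* sign with values in {-1, +1}; convention sgn 0 = +1 *)
Definition sgn (t : R) : R := if 0 <= t then 1 else -1.

Definition asinh (t : R) : R := ln (t + Num.sqrt (t ^+ 2 + 1)).

Definition dotp n (u v : 'rV[R]_n) : R := (u *m v^T) 0 0.

Definition lorentzH n : 'M[R]_n.+1 :=
  diag_mx (\row_(i < n.+1) (if i == ord0 then -1 else 1)).
Definition lorentz n (u v : 'rV[R]_n.+1) : R := (u *m lorentzH n *m v^T) 0 0.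

Definition euclid_space d : set 'rV[R]_d := setT.
Definition sphere_space d (CS : R) : set 'rV[R]_d.+1 :=
  [set x | dotp x x = CS^-1].
Definition hyperbolic_space d (CH : R) : set 'rV[R]_d.+1 :=
  [set x | lorentz x x = CH^-1 /\ 0 < x 0 ord0].

Definition euclid_classifiers d : set ('rV[R]_d -> R) :=
  [set h | exists (w : 'rV[R]_d) (b : R),
     Num.sqrt (dotp w w) = 1 /\ h = (fun x => sgn (dotp w x + b))].
Definition sphere_classifiers d (CS : R) : set ('rV[R]_d.+1 -> R) :=
  [set h | exists w : 'rV[R]_d.+1,
     dotp w w = CS /\ h = (fun x => sgn (asin (dotp w x)))].
Definition hyperbolic_classifiers d (CH : R) : set ('rV[R]_d.+1 -> R) :=
  [set h | exists w : 'rV[R]_d.+1,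
     lorentz w w = - CH /\ h = (fun x => sgn (asinh (lorentz w x)))].

Definition shatters (X : eqType) (D : set X) (Hc : set (X -> R)) (s : seq X) :=
  uniq s /\ (forall x, x \in s -> D x) /\
  forall lab : X -> bool, exists2 h, Hc h &
    forall x, x \in s -> h x = (if lab x then 1 else -1).

Definition VCdim_is (X : eqType) (D : set X) (Hc : set (X -> R)) (n : nat) :=
  (exists s, shatters D Hc s /\ size s = n) /\
  (forall s, shatters D Hc s -> (size s <= n)%N).

End Defs.

From mathcomp Require Import all_boot all_order all_algebra.
From mathcomp Require Import all_classical all_reals all_analysis.
From mathcomp Require Import ring lra.
Set Implicit Arguments. Unset Strict Implicit. Unset Printing Implicit Defensive.
Import Order.TTheory GRing.Theory Num.Theory.
Local Open Scope ring_scope.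

(* Upper bound: in every model a classifier is [sgn] of a linear functional of a
   feature vector of dimension [d + 1] ([x] itself on the sphere and the
   hyperboloid, where [asin] and [asinh] preserve signs; [(x, 1)] for affine
   classifiers on [R^d]).  The features of more than [d + 1] points are linearly
   dependent, and labelling each point by the sign of its coefficient in a
   dependence relation cannot be realised. *)

Section LinearClassifiers.
Variable R : realType.
Implicit Types (a b c t : R) (l : bool).

Definition sgnb l : R := if l then 1 else -1.

Lemma sgnbK l : sgnb l * sgnb l = 1.
Proof. by case: l; rewrite /sgnb; ring. Qed.

Lemma sgnb_inj : injective sgnb.
Proof. by case; case => //; rewrite /sgnb => h; exfalso; lra. Qed.

Lemma sgnE t : sgn t = sgnb (0 <= t).
Proof. by []. Qed.

Lemma sgn_pmul_sgnb c l : 0 < c -> sgn (c * sgnb l) = sgnb l.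
Proof.
move=> c_gt0; rewrite sgnE; congr sgnb.
case: l; rewrite /sgnb ?mulr1 ?mulrN1; first exact/ltW.
by rewrite oppr_ge0 leNgt c_gt0.
Qed.

Lemma sgn_asin t : -1 <= t <= 1 -> sgn (asin t) = sgn t.
Proof.
move=> t_in; have [/andP[asin_ge asin_le] sin_asin] := asin_def t_in.
have pi_gt0 := @pi_gt0 R.
rewrite !sgnE; congr sgnb; case: (leP 0 (asin t)) => asin_sign.
  by rewrite -sin_asin sin_ge0_pi // asin_sign /=; lra.
have : 0 < sin (- asin t) by apply: sin_gt0_pi; apply/andP; split; lra.
by rewrite sinN sin_asin oppr_gt0 => /lt_geF.
Qed.

Lemma sgn_asinh t : sgn (asinh t) = sgn t.
Proof.
rewrite !sgnE /asinh; congr sgnb.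
set r := Num.sqrt (t ^+ 2 + 1).
have r_ge0 : 0 <= r by rewrite sqrtr_ge0.
have r_sqr : r * r = t * t + 1 by rewrite -!expr2 sqr_sqrtr // addr_ge0 // sqr_ge0.
have tr_gt0 : 0 < t + r by nra.
case: (leP 0 t) => t_sign; first by rewrite ln_ge0 //; nra.
by apply/negbTE; rewrite -ltNge ln_lt0 // tr_gt0 /=; nra.
Qed.

Lemma dotpE n (u v : 'rV[R]_n) : dotp u v = \sum_i u 0 i * v 0 i.
Proof. by rewrite /dotp mxE; apply: eq_bigr => i _; rewrite mxE. Qed.

Lemma dotpZl n c (u v : 'rV[R]_n) : dotp (c *: u) v = c * dotp u v.
Proof. by rewrite /dotp -scalemxAl mxE. Qed.

Lemma dotpZr n c (u v : 'rV[R]_n) : dotp u (c *: v) = c * dotp u v.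
Proof. by rewrite /dotp linearZ -scalemxAr mxE. Qed.

Lemma dotp0r n (u : 'rV[R]_n) : dotp u 0 = 0.
Proof. by rewrite /dotp trmx0 mulmx0 mxE. Qed.

Lemma dotp_delta n (u : 'rV[R]_n) j : dotp u (delta_mx 0 j) = u 0 j.
Proof. by rewrite /dotp trmx_delta -colE mxE. Qed.

Lemma dotp_const1 c : dotp (const_mx c : 'rV[R]_1) (const_mx 1) = c.
Proof. by rewrite dotpE big_ord1 !mxE mulr1. Qed.

Lemma dotp_row_mx m n (u x : 'rV[R]_m) (a y : 'rV[R]_n) :
  dotp (row_mx u a) (row_mx x y) = dotp u x + dotp a y.
Proof. by rewrite /dotp tr_row_mx mul_row_col mxE. Qed.

Lemma dotp_mulmx m n (u : 'rV[R]_n) (v : 'rV[R]_m) (A : 'M[R]_(m, n)) :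
  dotp u (v *m A) = \sum_i v 0 i * dotp u (row i A).
Proof.
rewrite dotpE; under [RHS]eq_bigr do rewrite dotpE mulr_sumr.
rewrite exchange_big /=; apply: eq_bigr => k _; rewrite mxE mulr_sumr.
by apply: eq_bigr => i _; rewrite !mxE; ring.
Qed.

Lemma sqr_coord_le_dotp n (u : 'rV[R]_n) j : u 0 j ^+ 2 <= dotp u u.
Proof.
rewrite dotpE (bigD1 j) //= expr2 lerDl.
by apply: sumr_ge0 => i _; rewrite -expr2 sqr_ge0.
Qed.

(* Expand [0 <= |w +- c x|^2] using [|w|^2 = c] and [|x|^2 = 1/c]. *)
Lemma dotp_sphere_bound n c (w x : 'rV[R]_n) : 0 < c ->
  dotp w w = c -> dotp x x = c^-1 -> -1 <= dotp w x <= 1.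
Proof.
move=> c_gt0 ww xx.
have cc : c ^+ 2 * c^-1 = c by rewrite expr2 -mulrA mulfV ?mulr1 // gt_eqF.
have expand e : \sum_i (w 0 i + e * c * x 0 i) ^+ 2 =
    dotp w w + 2 * e * c * dotp w x + e ^+ 2 * (c ^+ 2 * dotp x x).
  by rewrite !dotpE !mulr_sumr -!big_split /=; apply: eq_bigr => i _; ring.
have sqr_sum_ge0 e : 0 <= \sum_i (w 0 i + e * c * x 0 i) ^+ 2.
  by apply: sumr_ge0 => i _; apply: sqr_ge0.
have := sqr_sum_ge0 1; have := sqr_sum_ge0 (-1); rewrite !expand ww xx cc.
by move=> h1 h2; apply/andP; split; nra.
Qed.

Lemma lorentzE n (u v : 'rV[R]_n.+1) : lorentz u v = dotp (u *m lorentzH R n) v.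
Proof. by []. Qed.

Lemma lorentzZl n c (u v : 'rV[R]_n.+1) : lorentz (c *: u) v = c * lorentz u v.
Proof. by rewrite !lorentzE -scalemxAl dotpZl. Qed.

Lemma lorentzZr n c (u v : 'rV[R]_n.+1) : lorentz u (c *: v) = c * lorentz u v.
Proof. by rewrite !lorentzE dotpZr. Qed.

Definition lvec n a (u : 'rV[R]_n) : 'rV[R]_n.+1 :=
  \row_i (if unlift ord0 i is Some j then u 0 j else a).

Lemma lvec0 n a (u : 'rV[R]_n) : lvec a u 0 ord0 = a.
Proof. by rewrite mxE unlift_none. Qed.

Lemma lvecS n a (u : 'rV[R]_n) j : lvec a u 0 (lift ord0 j) = u 0 j.
Proof. by rewrite mxE liftK. Qed.

Lemma lorentz_lvec n a b (u v : 'rV[R]_n) :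
  lorentz (lvec a u) (lvec b v) = - (a * b) + dotp u v.
Proof.
rewrite lorentzE /lorentzH mul_mx_diag dotpE big_ord_recl !mxE eqxx unlift_none dotpE.
congr (_ + _); first by ring.
by apply: eq_bigr => j _; rewrite !mxE eq_sym (negbTE (neq_lift _ _)) liftK mulr1.
Qed.

Lemma exists_pscale q c : 0 < q -> 0 < c -> exists2 m, 0 < m & m * m * q = c.
Proof.
move=> q_gt0 c_gt0; have cq_gt0 : 0 < c / q by rewrite divr_gt0.
exists (Num.sqrt (c / q)); first by rewrite sqrtr_gt0.
by rewrite -expr2 sqr_sqrtr ?ltW // divfK // gt_eqF.
Qed.

Lemma sgn_eq_sgnb t l : sgn t = sgnb l -> (0 <= t) = l.
Proof. by rewrite sgnE => /sgnb_inj. Qed.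

(* Radon-type argument: the labelling [sgn (lam i)] of the points with
   [lam i != 0] would make every term of the vanishing sum negative. *)
Lemma dependent_not_shatters (X : eqType) (D : set X) (Hc : set (X -> R))
    (s : seq X) (lam : 'I_(size s) -> R) (i0 : 'I_(size s)) :
  lam i0 != 0 ->
  (forall h, Hc h -> exists2 f : X -> R, {in s, forall x, h x = sgn (f x)} &
     \sum_i lam i * f (tnth (in_tuple s) i) = 0) ->
  ~ shatters D Hc s.
Proof.
wlog lam_gt0 : lam / 0 < lam i0 => [gen|_ Hdep [s_uniq [_ shat]]].
  rewrite neq_lt => /orP[lam_lt0 Hdep|lam_gt0]; last by apply: gen; rewrite // gt_eqF.
  apply: (gen (fun i => - lam i)); rewrite ?oppr_gt0 ?oppr_eq0 ?lt_eqF //.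
  move=> h /Hdep[f hf sum0]; exists f => //.
  by under eq_bigr do rewrite mulNr; rewrite sumrN sum0 oppr0.
pose t := in_tuple s.
have [h /Hdep[f hf sum0] hlab] := shat (fun x => lam (insubd i0 (index x s)) <= 0).
have term_sign i : lam i * f (tnth t i) <= 0 /\ (0 < lam i -> lam i * f (tnth t i) < 0).
  have /hlab : tnth t i \in s by apply: mem_tnth.
  rewrite hf ?mem_tnth // => /sgn_eq_sgnb.
  rewrite (tnth_nth (tnth t i0)) /= index_uniq // valKd.
  by case: (leP (lam i) 0) => lam_i f_sign; split; nra.
suff : \sum_i lam i * f (tnth t i) < 0 by rewrite sum0 ltxx.
rewrite (bigD1 i0) //= -[ltRHS](addr0 0) ltr_leD ?(term_sign i0).2 //.
by apply: sumr_le0 => i _; case: (term_sign i).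
Qed.

Lemma exists_left_kernel m n (A : 'M[R]_(m, n)) : (n < m)%N ->
  exists2 v : 'rV[R]_m, v *m A = 0 & v != 0.
Proof.
move=> lt_nm; have : ~~ row_free A.
  by rewrite -row_leq_rank -ltnNge (leq_ltn_trans (rank_leq_col A)).
by rewrite -kermx_eq0 => /rowV0Pn[v /sub_kermxP vA0 v_nz]; exists v.
Qed.

Lemma shatters_size_le (X : eqType) n (phi : X -> 'rV[R]_n) (D : set X)
    (Hc : set (X -> R)) (s : seq X) :
  (forall h, Hc h -> exists u : 'rV[R]_n, {in s, forall x, h x = sgn (dotp u (phi x))}) ->
  shatters D Hc s -> (size s <= n)%N.
Proof.
move=> Hlin shat; rewrite leqNgt; apply/negP => lt_ns.
pose A := \matrix_i phi (tnth (in_tuple s) i).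
have [v vA0 /rV0Pn[i0 v_nz]] := exists_left_kernel A lt_ns.
apply: (dependent_not_shatters v_nz _ shat) => h /Hlin[u hu].
exists (fun x => dotp u (phi x)) => //.
rewrite -[RHS](dotp0r u) -vA0 dotp_mulmx.
by apply: eq_bigr => i _; rewrite rowK.
Qed.

Definition sep_row n (lab : 'I_n -> bool) l : 'rV[R]_n :=
  \row_j (2 * sgnb (lab j) - sgnb l).

Lemma dotp_sep_row_ge1 n (lab : 'I_n -> bool) l : (0 < n)%N ->
  1 <= dotp (sep_row lab l) (sep_row lab l).
Proof.
move=> n_gt0; apply: le_trans (sqr_coord_le_dotp _ (Ordinal n_gt0)).
by rewrite mxE; case: (lab _); case: l; rewrite /sgnb; lra.
Qed.

Lemma delta_row_inj n : injective (fun j : 'I_n => delta_mx 0 j : 'rV[R]_n).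
Proof.
move=> i j /rowP/(_ j); rewrite !mxE !eqxx /=; case: eqP => // _ /eqP.
by rewrite eq_sym oner_eq0.
Qed.

(* The weight [2 e_j - e_0] with offset [e_0] evaluates to [2 e_j] at the basis
   vector [j] and to [e_0] at the origin. *)
Lemma euclid_shatters n : (0 < n)%N ->
  exists s, shatters (@euclid_space R n) (@euclid_classifiers R n) s /\ size s = n.+1.
Proof.
move=> n_gt0; exists (0 :: [seq delta_mx 0 j | j <- enum 'I_n]).
split; last by rewrite /= size_map size_enum_ord.
split; [|split] => //.
  rewrite /= map_inj_uniq ?enum_uniq ?andbT; last exact: delta_row_inj.
  apply/mapP => -[j _ /rowP/(_ j)]; rewrite !mxE !eqxx /= => /eqP.
  by rewrite eq_sym oner_eq0.
move=> lab; set e0 := sgnb (lab 0).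
pose a := sep_row (fun j => lab (delta_mx 0 j)) (lab 0).
have aa_gt0 : 0 < dotp a a by apply: lt_le_trans ltr01 (dotp_sep_row_ge1 _ _ n_gt0).
have [m m_gt0 mma] := exists_pscale aa_gt0 ltr01.
exists (fun x => sgn (dotp (m *: a) x + m * e0)).
  exists (m *: a), (m * e0); split => //.
  by rewrite dotpZl dotpZr mulrA mma sqrtr1.
move=> x; rewrite inE => /predU1P[-> | /mapP[j _ ->]].
  by rewrite dotp0r add0r sgn_pmul_sgnb.
by rewrite dotpZl dotp_delta mxE -mulrDr subrK mulrA sgn_pmul_sgnb // mulr_gt0.
Qed.

Lemma sphere_shatters d c : 0 < c ->
  exists s, shatters (@sphere_space R d c) (@sphere_classifiers R d c) s /\ size s = d.+1.
Proof.
move=> c_gt0; have cV_gt0 : 0 < c^-1 by rewrite invr_gt0.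
have [r r_gt0] := exists_pscale ltr01 cV_gt0.
rewrite mulr1 => rr; pose p j := r *: delta_mx 0 j : 'rV[R]_d.+1.
have pp j : dotp (p j) (p j) = c^-1.
  by rewrite dotpZl dotpZr dotp_delta mxE !eqxx /= mulr1 rr.
exists [seq p j | j <- enum 'I_d.+1]; split; last by rewrite size_map size_enum_ord.
split; [|split].
- rewrite map_inj_uniq ?enum_uniq // => i j.
  by move=> /(scalerI (negbT (gt_eqF r_gt0)))/delta_row_inj.
- by move=> x /mapP[j _ ->]; apply: pp.
move=> lab; pose w0 := \row_j sgnb (lab (p j)).
have w0w0 : dotp w0 w0 = d.+1%:R.
  by rewrite dotpE; under eq_bigr do rewrite mxE sgnbK; rewrite sumr_const card_ord.
have [m m_gt0 mm] := exists_pscale (ltr0Sn R d) c_gt0.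
have ww : dotp (m *: w0) (m *: w0) = c by rewrite dotpZl dotpZr mulrA w0w0.
exists (fun x => sgn (asin (dotp (m *: w0) x))); first by exists (m *: w0).
move=> x /mapP[j _ ->]; rewrite sgn_asin; last exact: dotp_sphere_bound c_gt0 ww (pp j).
by rewrite dotpZl dotpZr dotp_delta mxE mulrA sgn_pmul_sgnb // mulr_gt0.
Qed.

(* The points are [(4k, 0)] and [(5k, 3k e_j)] with [16 k^2 = -1/c]; the weight
   [w = (-3 e0, 5 a)] gives [[w, (4k, 0)] = 12 k e0] and [[w, (5k, 3k e_j)] = 30 k e_j]. *)
Lemma hyperbolic_shatters d c : (0 < d)%N -> c < 0 ->
  exists s, shatters (@hyperbolic_space R d c) (@hyperbolic_classifiers R d c) s /\
    size s = d.+1.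
Proof.
move=> d_gt0 c_lt0; have NcV_gt0 : 0 < - c^-1 by rewrite oppr_gt0 invr_lt0.
have [k k_gt0 kk] := exists_pscale (ltr0Sn R 15) NcV_gt0.
pose q0 := lvec (4 * k) (0 : 'rV[R]_d).
pose q (j : 'I_d) := lvec (5 * k) ((3 * k) *: delta_mx 0 j).
exists (q0 :: [seq q j | j <- enum 'I_d]).
split; last by rewrite /= size_map size_enum_ord.
split; [|split].
- rewrite /= map_inj_uniq ?enum_uniq ?andbT.
    apply/mapP => -[j _ /(congr1 (fun v : 'rV[R]_d.+1 => v 0 ord0))].
    by rewrite !lvec0 => ?; lra.
  move=> i j /(congr1 (fun v : 'rV[R]_d.+1 => v 0 (lift ord0 i))).
  rewrite !lvecS !mxE !eqxx /=.
  by case: eqP => // _ /= ?; exfalso; lra.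
- move=> x; rewrite inE => /predU1P[-> | /mapP[j _ ->]]; rewrite /hyperbolic_space /=.
    by rewrite lorentz_lvec dotp0r lvec0; split; nra.
  by rewrite lorentz_lvec dotpZl dotpZr dotp_delta mxE !eqxx lvec0 /=; split; nra.
move=> lab; set e0 := sgnb (lab q0).
pose a := sep_row (fun j => lab (q j)) (lab q0).
pose w := lvec (-3 * e0) (5 *: a).
have ww_gt0 : 0 < lorentz w w.
  rewrite lorentz_lvec dotpZl dotpZr.
  have := dotp_sep_row_ge1 (fun j => lab (q j)) (lab q0) d_gt0.
  have := sgnbK (lab q0); rewrite -/e0 -/a; nra.
have Nc_gt0 : 0 < - c by rewrite oppr_gt0.
have [m m_gt0 mm] := exists_pscale ww_gt0 Nc_gt0.
exists (fun x => sgn (asinh (lorentz (m *: w) x))).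
  by exists (m *: w); rewrite lorentzZl lorentzZr mulrA mm.
move=> x; rewrite inE => /predU1P[-> | /mapP[j _ ->]].
  rewrite sgn_asinh lorentzZl lorentz_lvec dotp0r addr0.
  have -> : m * - (-3 * e0 * (4 * k)) = (12 * m * k) * e0 by ring.
  by rewrite sgn_pmul_sgnb // !mulr_gt0.
rewrite sgn_asinh lorentzZl lorentz_lvec dotpZl dotpZr dotp_delta mxE.
rewrite -/e0 (_ : m * _ = 30 * m * k * sgnb (lab (q j))); last by ring.
by rewrite sgn_pmul_sgnb // !mulr_gt0.
Qed.

Lemma euclid_shatters_size n s :
  shatters (@euclid_space R n) (@euclid_classifiers R n) s -> (size s <= n.+1)%N.
Proof.
rewrite -[n.+1]addn1; apply: (shatters_size_le (phi := fun x => row_mx x (const_mx 1))).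
move=> _ [w [b [_ ->]]]; exists (row_mx w (const_mx b)) => x _.
by rewrite dotp_row_mx dotp_const1.
Qed.

Lemma sphere_shatters_size d c s : 0 < c ->
  shatters (@sphere_space R d c) (@sphere_classifiers R d c) s -> (size s <= d.+1)%N.
Proof.
move=> c_gt0 shat; apply: (shatters_size_le (phi := id) _ shat) => _ [w [ww ->]].
exists w => x x_in; rewrite sgn_asin //.
exact: dotp_sphere_bound c_gt0 ww (shat.2.1 x x_in).
Qed.

Lemma hyperbolic_shatters_size d c s :
  shatters (@hyperbolic_space R d c) (@hyperbolic_classifiers R d c) s -> (size s <= d.+1)%N.
Proof.
apply: (shatters_size_le (phi := id)) => _ [w [_ ->]].
by exists (w *m lorentzH R d) => x _; rewrite sgn_asinh lorentzE.
Qed.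

End LinearClassifiers.

Theorem theorem1 (R : realType) (d : nat) (hd : (2 <= d)%N) :
  VCdim_is (@euclid_space R d) (@euclid_classifiers R d) d.+1 /\
  (forall CS : R, 0 < CS ->
     VCdim_is (@sphere_space R d CS) (@sphere_classifiers R d CS) d.+1) /\
  (forall CH : R, CH < 0 ->
     VCdim_is (@hyperbolic_space R d CH) (@hyperbolic_classifiers R d CH) d.+1).
Proof.
have d_gt0 : (0 < d)%N by apply: leq_trans hd.
split; [|split] => [|CS CS_gt0|CH CH_lt0]; split.
- exact: euclid_shatters.
- exact: euclid_shatters_size.
- exact: sphere_shatters.
- by move=> s; apply: sphere_shatters_size.
- exact: hyperbolic_shatters.
- exact: hyperbolic_shatters_size.
Qed.
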